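(* Let $\mathcal{M}=(S,A,AP,L,I)$ be an interval Markov decision process and let $s,t\in S$ with $s\sim_{(\forall)} t$. Then for every PCTL state formula $\varphi$ we have $s\models_{(\forall)}\varphi$ if and only if $t\models_{(\forall)}\varphi$.
   Context: An interval MDP (IMDP) is a tuple $(S,A,AP,L,I)$ with $S$ a finite set of states, $A$ a finite set of actions, $AP$ a finite set of atomic propositions, $L:S\to 2^{AP}$ a labelling, and $I:S\times A\times S\to\mathbb{I}$ where $\mathbb{I}$ is a set of subintervals of $[0,1]$. For $s\in S,a\in A$, write $s\xrightarrow{a}\mu$ if $\mu$ is a probability distribution on $S$ with $\mu(s')\in I(s,a,s')$ for all $s'$; the set $\Gamma_{s,a}=\{\mu\mid s\xrightarrow{a}\mu\}$ is required to be non-empty. Paths are sequences of states; $\mathrm{last}(\omega)$ is the last state of a finite path. A scheduler is a function $\sigma$ from finite paths to distributions over $A$; a nature is a function $\pi$ mapping a finite path $\omega$ and action $a$ to an element of $\Gamma_{\mathrm{last}(\omega),a}$. $\Sigma,\Pi$ denote the sets of all schedulers and natures. For a state $s$, $\sigma$, $\pi$, $\Pr^{\sigma,\pi}_s$ is the unique probability measure on infinite paths (with the cylinder $\sigma$-algebra) such that the cylinder of the one-state path $s'$ has probability $1$ if $s'=s$ and $0$ otherwise, and $\Pr^{\sigma,\pi}_s[\mathrm{Cyl}(\omega s')]=\Pr^{\sigma,\pi}_s[\mathrm{Cyl}(\omega)]\cdot\sum_{a\in A}\sigma(\omega)(a)\,\pi(\omega,a)(s')$. PCTL: state formulas $\varphi::=\mathit{true}\mid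 x\mid\neg\varphi\mid\varphi_1\wedge\varphi_2\mid \mathsf{P}_{\bowtie p}(\psi)$ and path formulas $\psi::=\mathsf{X}\varphi\mid\varphi_1\mathsf{U}\varphi_2\mid\varphi_1\mathsf{U}^{\le k}\varphi_2$, with $x\in AP$, rational $p\in[0,1]$, $\bowtie\in\{\le,<,\ge,>\}$, $k\in\mathbb{N}$. The relation $\models_{(\forall)}$: $s\models x$ iff $x\in L(s)$; negation and conjunction as usual; $s\models_{(\forall)}\mathsf{P}_{\bowtie p}(\psi)$ iff for all $\sigma\in\Sigma$ and all $\pi\in\Pi$, $\Pr^{\sigma,\pi}_s[\{\omega\mid\omega\models_{(\forall)}\psi\}]\bowtie p$. For an infinite path $\omega=s_1s_2\cdots$: $\omega\models\mathsf{X}\varphi$ iff $s_2\models\varphi$; $\omega\models\varphi_1\mathsf{U}^{\le k}\varphi_2$ iff there is $i\le k$ with $s_i\models\varphi_2$ and $s_j\models\varphi_1$ for all $j<i$; $\omega\models\varphi_1\mathsf{U}\varphi_2$ iff $\omega\models\varphi_1\mathsf{U}^{\le k}\varphi_2$ for some $k\in\mathbb{N}$. Cooperative bisimulation: write $s\to\mu$ if $\mu$ lies in the convex hull of $\bigcup_{a\in A}\Gamma_{s,a}$. An equivalence relation $R\subseteq S\times S$ is a probabilistic $(\forall)$-bisimulation if for all $(s,t)\in R$: $L(s)=L(t)$, and for each $s\to\mu$ there is $t\to\nu$ with $\mu(C)=\nu(C)$ for every equivalence class $C$ of $R$. $s\sim_{(\forall)}t$ iff some probabilistic $(\forall)$-bisimulation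 contains $(s,t)$. *)

From HB Require Import structures.
From mathcomp Require Import all_boot all_order all_algebra.
From mathcomp Require Import all_classical all_reals.
From mathcomp Require Import topology normedtype sequences measure.
Set Implicit Arguments. Unset Strict Implicit. Unset Printing Implicit Defensive.
Import Order.TTheory GRing.Theory Num.Theory.
Import numFieldNormedType.Exports.
Local Open Scope classical_set_scope.
Local Open Scope ring_scope.

Section IMDP.
Variables (R : realType) (S A AP : finType).
Variables (L : S -> {set AP}) (I : S -> A -> S -> interval R).

Definition is_dist (T : finType) (mu : T -> R) : Prop :=
  (forall x, 0 <= mu x) /\ \sum_(x : T) mu x = 1.

Definition Gamma (s : S) (a : A) : set (S -> R) :=
  [set mu | is_dist mu /\ forall s', mu s' \in I s a s'].

Definition imdp_wf : Prop :=
  (forall s a s' x, x \in I s a s' -> x \in `[0, 1]%R) /\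
  (forall s a, exists mu, Gamma s a mu).

(* Finite paths are non-empty sequences of states, represented as [x :: w];
   their last state is [last x w].  Schedulers and natures are functions on
   finite paths; their constraints are imposed on non-empty sequences. *)
Definition scheduler (sigma : seq S -> A -> R) : Prop :=
  forall x w, is_dist (sigma (x :: w)).

Definition nature (pi : seq S -> A -> S -> R) : Prop :=
  forall x w a, Gamma (last x w) a (pi (x :: w) a).

Definition ipath := nat -> S.

Definition Cyl (w : seq S) : set ipath :=
  [set om | forall i, (i < size w)%N -> om i = nth (om i) w i].

Definition cylinders : set (set ipath) :=
  [set C | exists x w, C = Cyl (x :: w)].

Definition cyl_measurable : set (set ipath) := <<s setT, cylinders >>.

Definition prob_measure (P : set ipath -> R) : Prop :=
  [/\ forall B, cyl_measurable B -> 0 <= P B,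
      P set0 = 0,
      P setT = 1 &
      forall F : nat -> set ipath, (forall n, cyl_measurable (F n)) ->
        trivIset setT F ->
        (fun n => \sum_(0 <= i < n) P (F i)) @ \oo --> P (\bigcup_n F n)].

Definition is_Pr (s : S) (sigma : seq S -> A -> R) (pi : seq S -> A -> S -> R)
    (P : set ipath -> R) : Prop :=
  [/\ prob_measure P,
      forall s', P (Cyl [:: s']) = (if s' == s then 1 else 0) &
      forall x w s', P (Cyl (rcons (x :: w) s')) =
        P (Cyl (x :: w)) * \sum_(a : A) sigma (x :: w) a * pi (x :: w) a s'].

End IMDP.

Inductive cmp := CLe | CLt | CGe | CGt.

Inductive sform (AP : Type) :=
| FTrue
| FAtom of AP
| FNot of sform AP
| FAnd of sform AP & sform AP
| FProb of cmp & rat & pform AP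
with pform (AP : Type) :=
| FNext of sform AP
| FUntil of sform AP & sform AP
| FBUntil of sform AP & sform AP & nat.

Arguments FTrue {AP}.

Definition cmp_sem (R : realType) (c : cmp) (x y : R) : Prop :=
  match c with
  | CLe => x <= y | CLt => x < y | CGe => x >= y | CGt => x > y
  end.

Section Semantics.
Variables (R : realType) (S A AP : finType).
Variables (L : S -> {set AP}) (I : S -> A -> S -> interval R).

(* om |= phi1 U^{<=k} phi2, positions are 1-based in the paper:
   om = s_1 s_2 ..., so position i corresponds to index i.-1 *)
Fixpoint sat (s : S) (phi : sform AP) {struct phi} : Prop :=
  match phi with
  | FTrue => True
  | FAtom x => x \in L s
  | FNot phi' => ~ sat s phi'
  | FAnd phi1 phi2 => sat s phi1 /\ sat s phi2
  | FProb c p psi =>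
      forall sigma pi, scheduler sigma -> nature I pi ->
      forall P, is_Pr s sigma pi P ->
      cmp_sem c (P [set om | psat om psi]) (ratr p)
  end
with psat (om : ipath S) (psi : pform AP) {struct psi} : Prop :=
  match psi with
  | FNext phi => sat (om 1%N) phi
  | FUntil phi1 phi2 =>
      exists k : nat, exists i : nat, [/\ (1 <= i <= k)%N, sat (om i.-1) phi2 &
        forall j, (1 <= j < i)%N -> sat (om j.-1) phi1]
  | FBUntil phi1 phi2 k =>
      exists i : nat, [/\ (1 <= i <= k)%N, sat (om i.-1) phi2 &
        forall j, (1 <= j < i)%N -> sat (om j.-1) phi1]
  end.

Definition ctrans (s : S) (mu : S -> R) : Prop :=
  exists (n : nat) (lam : 'I_n -> R) (a : 'I_n -> A) (nu : 'I_n -> S -> R),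
    [/\ forall i, 0 <= lam i,
        \sum_(i < n) lam i = 1,
        forall i, Gamma I s (a i) (nu i) &
        forall s', mu s' = \sum_(i < n) lam i * nu i s'].

Definition equivalence_rel (Rel : rel S) : Prop :=
  [/\ reflexive Rel, symmetric Rel & transitive Rel].

Definition mass_class (Rel : rel S) (mu : S -> R) (c : S) : R :=
  \sum_(x | Rel c x) mu x.

Definition forall_bisimulation (Rel : rel S) : Prop :=
  equivalence_rel Rel /\
  forall s t, Rel s t ->
    L s = L t /\
    forall mu, ctrans s mu ->
      exists nu, ctrans t nu /\ forall c, mass_class Rel mu c = mass_class Rel nu c.

Definition forall_bisimilar (s t : S) : Prop :=
  exists Rel, forall_bisimulation Rel /\ Rel s t.

End Semantics.

Fixpoint wf_sform (AP : Type) (phi : sform AP) : bool :=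
  match phi with
  | FTrue => true
  | FAtom _ => true
  | FNot phi' => wf_sform phi'
  | FAnd phi1 phi2 => wf_sform phi1 && wf_sform phi2
  | FProb _ p psi => ((0 <= p) && (p <= 1))%R && wf_pform psi
  end
with wf_pform (AP : Type) (psi : pform AP) : bool :=
  match psi with
  | FNext phi => wf_sform phi
  | FUntil phi1 phi2 => wf_sform phi1 && wf_sform phi2
  | FBUntil phi1 phi2 _ => wf_sform phi1 && wf_sform phi2
  end.

From Pilot Require Import Defs.
From HB Require Import structures.
From mathcomp Require Import all_boot all_order all_algebra.
From mathcomp Require Import all_classical all_reals.
From mathcomp Require Import topology normedtype sequences measure.
From mathcomp Require Import ereal lebesgue_measure.
From mathcomp Require Import zify.
Set Implicit Arguments. Unset Strict Implicit. Unset Printing Implicit Defensive.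
Import Order.TTheory GRing.Theory Num.Theory.
Import numFieldNormedType.Exports.
Local Open Scope classical_set_scope.
Local Open Scope ring_scope.

(* Bisimilar states carry the same labels, so the real
   case is the probabilistic operator.  A scheduler and a nature from a state v are
   simulated from a bisimilar state u: the bisimulation answers every convex
   combination of transitions of v by one of u with the same mass on each
   equivalence class, and mixing these answers over the histories with the same
   sequence of classes gives a scheduler and a nature from u under which every
   finite sequence of classes has the same probability.  By induction, path
   formulas only see sequences of classes, so their events are finite unions of
   class cylinders (next, bounded until) or a disjoint countable union of such
   unions (until, split by the first time the right-hand formula holds), and get
   the same probability.  As the semantics quantifies over the measures satisfying
   the cylinder equations, such a measure must also exist for the simulating
   scheduler; it is the image of the Lebesgue measure on [0,1[. *)

Section ConvexCombination.
Variables (R : numDomainType) (T : eqType) (r : seq T) (P : pred T) (w : T -> R).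
Hypotheses (w_ge0 : forall j, P j -> 0 <= w j) (w_sum1 : \sum_(j <- r | P j) w j = 1).

Lemma convex_comb_support : exists2 j, j \in r & P j && (0 < w j).
Proof.
by apply/hasP; rewrite -psumr_neq0 // w_sum1 oner_neq0.
Qed.

Lemma convex_comb_ge (x : T -> R) a :
  (forall j, P j -> a <= x j) -> a <= \sum_(j <- r | P j) w j * x j.
Proof.
move=> ax; rewrite -[a]mul1r -w_sum1 mulr_suml; apply: ler_sum => j Pj.
by rewrite ler_wpM2l ?w_ge0 ?ax.
Qed.

Lemma convex_comb_gt (x : T -> R) a :
  (forall j, P j -> a < x j) -> a < \sum_(j <- r | P j) w j * x j.
Proof.
move=> ax; rewrite -subr_gt0.
have -> : \sum_(j <- r | P j) w j * x j - a = \sum_(j <- r | P j) w j * (x j - a).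
  rewrite [RHS](eq_bigr (fun j => w j * x j - w j * a)) => [|j _]; last by rewrite mulrBr.
  by rewrite sumrB -mulr_suml w_sum1 mul1r.
have wxa_ge0 j : P j -> 0 <= w j * (x j - a).
  by move=> Pj; rewrite mulr_ge0 ?w_ge0 // subr_ge0 ltW ?ax.
rewrite lt_def sumr_ge0 // andbT psumr_neq0 //.
have [j jr /andP [Pj wj_gt0]] := convex_comb_support.
by apply/hasP; exists j; rewrite // Pj mulr_gt0 // subr_gt0 ax.
Qed.

Lemma convex_comb_le (x : T -> R) a :
  (forall j, P j -> x j <= a) -> \sum_(j <- r | P j) w j * x j <= a.
Proof.
move=> xa; rewrite -lerN2 -sumrN; under eq_bigr do rewrite -mulrN.
by apply: convex_comb_ge => j Pj; rewrite lerN2 xa.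
Qed.

Lemma convex_comb_lt (x : T -> R) a :
  (forall j, P j -> x j < a) -> \sum_(j <- r | P j) w j * x j < a.
Proof.
move=> xa; rewrite -ltrN2 -sumrN; under eq_bigr do rewrite -mulrN.
by apply: convex_comb_gt => j Pj; rewrite ltrN2 xa.
Qed.

Lemma convex_comb_lbound (l : itv_bound R) (x : T -> R) :
  (forall j, P j -> (l <= BLeft (x j))%O) ->
  (l <= BLeft (\sum_(j <- r | P j) w j * x j))%O.
Proof.
case: l => [[] a|[]] lx; rewrite ?lteBSide ?bnd_simp //=.
- by apply: convex_comb_ge => j /lx; rewrite lteBSide.
- by apply: convex_comb_gt => j /lx; rewrite lteBSide.
- by have [j _ /andP [/lx]] := convex_comb_support; rewrite bnd_simp.
Qed.

Lemma convex_comb_ubound (u : itv_bound R) (x : T -> R) :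
  (forall j, P j -> (BRight (x j) <= u)%O) ->
  (BRight (\sum_(j <- r | P j) w j * x j) <= u)%O.
Proof.
case: u => [[] a|[]] xu; rewrite ?lteBSide ?bnd_simp //=.
- by apply: convex_comb_lt => j /xu; rewrite lteBSide.
- by apply: convex_comb_le => j /xu; rewrite lteBSide.
- by have [j _ /andP [/xu]] := convex_comb_support; rewrite bnd_simp.
Qed.

Lemma convex_comb_itv (i : interval R) (x : T -> R) :
  (forall j, P j -> x j \in i) -> \sum_(j <- r | P j) w j * x j \in i.
Proof.
case: i => l u xi; rewrite itv_boundlr convex_comb_lbound ?convex_comb_ubound // => j /xi;
  by rewrite itv_boundlr => /andP [].
Qed.

End ConvexCombination.

Section CylinderEvents.
Variable S : finType.

Lemma cyl_measurable_bigcup (F : nat -> set (ipath S)) :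
  (forall n, cyl_measurable (F n)) -> cyl_measurable (\bigcup_n F n).
Proof. by case: (smallest_sigma_algebra setT (@cylinders S)) => _ _; apply. Qed.

Lemma cyl_measurable_set0 : @cyl_measurable S set0.
Proof. by case: (smallest_sigma_algebra setT (@cylinders S)). Qed.

Lemma cyl_measurableU (B B' : set (ipath S)) :
  cyl_measurable B -> cyl_measurable B' -> cyl_measurable (B `|` B').
Proof.
move=> mB mB'; have -> : B `|` B' = \bigcup_n (if n is 0%N then B else B').
  apply/seteqP; split => om /=; first by case=> ?; [exists 0%N | exists 1%N].
  by case=> -[|n] _ ?; [left | right].
by apply: cyl_measurable_bigcup => -[].
Qed.

Lemma cyl_measurable_Cyl (w : seq S) : cyl_measurable (Cyl w).
Proof.
case: w => [|x w]; last by apply: sub_gen_smallest; exists x, w.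
have -> : Cyl [::] = setT `\` set0 :> set (ipath S).
  by apply/seteqP; split => om //= _; split.
by case: (smallest_sigma_algebra setT (@cylinders S)) => _ + _; apply; apply: cyl_measurable_set0.
Qed.

Lemma Cyl_disjoint (w w' : seq S) : size w = size w' -> w != w' -> Cyl w `&` Cyl w' = set0.
Proof.
move=> sww' ww'; apply/seteqP; split => // om [cw cw']; apply: (negP ww'); apply/eqP.
apply: (@eq_from_nth _ (om 0%N)) => // i iw.
rewrite (set_nth_default (om i)) // -cw // (set_nth_default (om i)) -?sww' //.
by rewrite -cw' // -sww'.
Qed.

Fixpoint paths (n : nat) : seq (seq S) :=
  if n is n'.+1 then [seq rcons w y | w <- paths n', y <- enum S] else [:: [::]].

Lemma mem_paths n w : (w \in paths n) = (size w == n).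
Proof.
elim: n w => [|n IH] w; first by case: w.
apply/idP/idP; first by case/allpairsP => -[w' y] /= [w'n _ ->]; rewrite size_rcons eqSS -IH.
case/lastP: w => [//|w' y]; rewrite size_rcons eqSS => w'n.
by apply/allpairsP; exists (w', y); rewrite /= IH w'n mem_enum.
Qed.

Lemma uniq_paths n : uniq (paths n).
Proof.
elim: n => [//|n IH] /=; apply: allpairs_uniq => //; first exact: enum_uniq.
by move=> [w y] [w' y'] _ _ /= /eqP; rewrite eqseq_rcons => /andP [/eqP -> /eqP ->].
Qed.

Definition prefix (om : ipath S) (n : nat) : seq S := mkseq om n.+1.

Lemma Cyl_prefix (w : seq S) n om : size w = n.+1 -> Cyl w om <-> prefix om n = w.
Proof.
move=> sw; split => [cw|<- i]; last by rewrite size_mkseq => i_lt; rewrite nth_mkseq.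
apply: (@eq_from_nth _ (om 0%N)); first by rewrite size_mkseq sw.
move=> i; rewrite size_mkseq => i_lt; rewrite nth_mkseq // cw ?sw //.
by apply: set_nth_default; rewrite sw.
Qed.

Definition prefix_event (n : nat) (D : pred (seq S)) : set (ipath S) :=
  [set om | D (prefix om n)].

Definition cyl_union (l : seq (seq S)) : set (ipath S) := [set om | exists2 w, w \in l & Cyl w om].

Lemma cyl_union_nil : cyl_union [::] = set0.
Proof. by apply/seteqP; split => om // -[]. Qed.

Lemma cyl_union_cons w l : cyl_union (w :: l) = Cyl w `|` cyl_union l.
Proof.
apply/seteqP; split => om /=.
  by case=> w'; rewrite inE => /orP [/eqP -> ?|w'l ?]; [left | right; exists w'].
by case=> [?|[w' w'l ?]]; [exists w; rewrite ?mem_head | exists w'; rewrite // inE w'l orbT].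
Qed.

Lemma cyl_measurable_union l : cyl_measurable (cyl_union l).
Proof.
elim: l => [|w l IH]; first by rewrite cyl_union_nil; apply: cyl_measurable_set0.
by rewrite cyl_union_cons; apply: cyl_measurableU => //; apply: cyl_measurable_Cyl.
Qed.

Lemma prefix_event_union n D : prefix_event n D = cyl_union [seq w <- paths n.+1 | D w].
Proof.
apply/seteqP; split => om.
  move=> Dom; exists (prefix om n); first by rewrite mem_filter mem_paths size_mkseq eqxx andbT.
  by apply/(Cyl_prefix _ (size_mkseq _ _)).
move=> [w]; rewrite mem_filter mem_paths => /andP [Dw /eqP sw].
by move/(Cyl_prefix _ sw); rewrite /prefix_event /= => ->.
Qed.

Lemma cyl_measurable_prefix_event n D : cyl_measurable (prefix_event n D).
Proof. by rewrite prefix_event_union; apply: cyl_measurable_union. Qed.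

End CylinderEvents.

Section ProbMeasure.
Variables (R : realType) (S : finType) (P : set (ipath S) -> R).
Hypothesis P_prob : prob_measure P.

Lemma prob_ge0 B : cyl_measurable B -> 0 <= P B.
Proof. by case: P_prob => P_ge0 _ _ _; apply: P_ge0. Qed.

Lemma prob_Cyl_ge0 w : 0 <= P (Cyl w).
Proof. exact: (prob_ge0 (cyl_measurable_Cyl w)). Qed.

Lemma prob_sum_lim (F : nat -> set (ipath S)) :
  (forall n, cyl_measurable (F n)) -> trivIset setT F ->
  (fun n => \sum_(0 <= i < n) P (F i)) @ \oo --> P (\bigcup_n F n).
Proof. by case: P_prob => _ _ _ P_additive; apply: P_additive. Qed.

Lemma probU B B' : cyl_measurable B -> cyl_measurable B' -> B `&` B' = set0 ->
  P (B `|` B') = P B + P B'.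
Proof.
move=> mB mB' BB'0.
pose F n := if n is 0%N then B else if n is 1%N then B' else set0.
have mF n : cyl_measurable (F n) by case: n => [|[|n]] //; apply: cyl_measurable_set0.
have tF : trivIset setT F.
  move=> i j _ _ [om [Fi Fj]].
  have BB'om : ~ (B om /\ B' om) by move=> BB'; have : (B `&` B') om by []; rewrite BB'0.
  by case: i j Fi Fj => [|[|i]] [|[|j]] //=; tauto.
have UF : \bigcup_n F n = B `|` B'.
  apply/seteqP; split => om /=; first by case=> [[|[|n]]] _ //= ?; [left | right].
  by case=> ?; [exists 0%N | exists 1%N].
have P0 : P set0 = 0 by case: P_prob.
have lim_const : (fun n => \sum_(0 <= i < n) P (F i)) @ \oo --> P B + P B'.
  rewrite -(cvg_shiftn 2); apply: cvg_near_cst; apply: nearW => n /=.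
  rewrite addn2 big_ltn // big_ltn //= addrA big_nat_cond big1 ?addr0 //.
  by case=> [|[|i]] //= _; exact: P0.
by rewrite -UF; apply: (cvg_unique _ (prob_sum_lim mF tF) lim_const).
Qed.

Lemma prob_cyl_union n (l : seq (seq S)) : (forall w, w \in l -> size w = n) -> uniq l ->
  P (cyl_union l) = \sum_(w <- l) P (Cyl w).
Proof.
elim: l => [|w l IH] sl; first by rewrite cyl_union_nil big_nil; case: P_prob.
move=> /= /andP [wl ul].
have sl' w' : w' \in l -> size w' = n by move=> w'l; rewrite sl // inE w'l orbT.
have disj : Cyl w `&` cyl_union l = set0.
  apply/seteqP; split => // om [cw [w' w'l cw']].
  have ww' : w != w' by apply: contraNneq wl => ->.
  have sww' : size w = size w' by rewrite (sl w (mem_head _ _)) (sl' w' w'l).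
  have : (Cyl w `&` Cyl w') om by [].
  by rewrite Cyl_disjoint.
rewrite cyl_union_cons big_cons -IH //.
by apply: probU => //; [apply: cyl_measurable_Cyl | apply: cyl_measurable_union].
Qed.

Lemma prob_prefix_event n D : P (prefix_event n D) = \sum_(w <- paths S n.+1 | D w) P (Cyl w).
Proof.
rewrite prefix_event_union (@prob_cyl_union n.+1) ?big_filter ?filter_uniq ?uniq_paths //.
by move=> w; rewrite mem_filter mem_paths => /andP [_ /eqP].
Qed.

End ProbMeasure.

Lemma prob_bigcup_eq (R : realType) (S : finType) (P P' : set (ipath S) -> R)
    (F : nat -> set (ipath S)) :
  prob_measure P -> prob_measure P' -> (forall n, cyl_measurable (F n)) ->
  trivIset setT F -> (forall n, P (F n) = P' (F n)) ->
  P (\bigcup_n F n) = P' (\bigcup_n F n).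
Proof.
move=> P_prob P'_prob mF tF PP'.
have sumsE : (fun n => \sum_(0 <= i < n) P (F i)) = (fun n => \sum_(0 <= i < n) P' (F i)).
  by apply/funext => n; apply: eq_bigr.
have := prob_sum_lim P_prob mF tF; rewrite sumsE => lim_P.
exact: cvg_unique lim_P (prob_sum_lim P'_prob mF tF).
Qed.

Lemma lebesgue_measure_itv_co (R : realType) (a b : R) :
  a <= b -> lebesgue_measure [set` `[a, b[] = (b - a)%:E.
Proof.
move=> ab; rewrite lebesgue_measure_itv /=; case: ltP => /=.
  by rewrite lte_fin => _; rewrite -EFinB.
rewrite lee_fin => ba; have -> : b = a by apply/eqP; rewrite eq_le ab ba.
by rewrite subrr.
Qed.

Lemma nat_threshold_crossing (R : realDomainType) (g : nat -> R) (u : R) (N : nat) :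
  g 0%N <= u -> u < g N -> exists2 k, (k < N)%N & g k <= u < g k.+1.
Proof.
move=> g0u; elim: N => [|N IH] uN; first by rewrite ltNge g0u in uN.
case: (leP (g N) u) => gNu; first by exists N; rewrite ?gNu.
by have [k kN gku] := IH gNu; exists k => //; apply: ltnW.
Qed.

(* A point of [0,1[ is read as a path digit by digit: each finite path [w] owns a
   subinterval of length the probability of [w], split among the extensions of [w]
   in the order of [enum S]. *)
Section PathMeasure.
Variables (R : realType) (S A : finType) (I : S -> A -> S -> interval R).
Variables (s0 : S) (sigma : seq S -> A -> R) (pi : seq S -> A -> S -> R).
Hypotheses (sigmaP : scheduler sigma) (piP : nature I pi).

Definition trans_prob (h : seq S) (y : S) : R := \sum_(a : A) sigma h a * pi h a y.

Lemma trans_prob_ge0 x w y : 0 <= trans_prob (x :: w) y.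
Proof.
apply: sumr_ge0 => a _; apply: mulr_ge0; first by case: (sigmaP x w).
by case: (piP x w a) => [[+ _] _]; apply.
Qed.

Lemma trans_prob_sum1 x w : \sum_y trans_prob (x :: w) y = 1.
Proof.
rewrite /trans_prob exchange_big /=; case: (sigmaP x w) => _ <-.
apply: eq_bigr => a _; rewrite -mulr_sumr.
by case: (piP x w a) => [[_ ->] _]; rewrite mulr1.
Qed.

Definition cum_prob (h : seq S) (k : nat) : R := \sum_(y <- take k (enum S)) trans_prob h y.

Lemma cum_prob0 h : cum_prob h 0 = 0.
Proof. by rewrite /cum_prob take0 big_nil. Qed.

Lemma cum_probS h k : (k < #|S|)%N ->
  cum_prob h k.+1 = cum_prob h k + trans_prob h (nth s0 (enum S) k).
Proof.
move=> kS; rewrite /cum_prob (take_nth s0); last by rewrite -cardE.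
by rewrite -cats1 big_cat big_seq1.
Qed.

Lemma cum_prob_full h k : (#|S| <= k)%N -> cum_prob h k = \sum_y trans_prob h y.
Proof.
by move=> Sk; rewrite /cum_prob take_oversize ?big_enum // -cardE.
Qed.

Lemma le_cum_prob x w k k' : (k <= k')%N -> cum_prob (x :: w) k <= cum_prob (x :: w) k'.
Proof.
elim: k' => [|k' IH]; first by rewrite leqn0 => /eqP ->.
rewrite leq_eqVlt => /orP [/eqP -> //| kk']; apply: le_trans (IH kk') _.
case: (ltnP k' #|S|) => k'S; first by rewrite cum_probS // lerDl trans_prob_ge0.
by rewrite !cum_prob_full // (leq_trans k'S).
Qed.

Lemma cum_prob_ge0 x w k : 0 <= cum_prob (x :: w) k.
Proof. by rewrite -(cum_prob0 (x :: w)); apply: le_cum_prob. Qed.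

Lemma cum_prob_le1 x w k : cum_prob (x :: w) k <= 1.
Proof.
rewrite -(trans_prob_sum1 x w) -(@cum_prob_full _ (maxn k #|S|)) ?leq_maxr //.
by apply: le_cum_prob; rewrite leq_maxl.
Qed.

(* [cyl_prob w] and [cyl_lo w] are the length and the left end of the interval of
   the finite path [w]; they recurse on the reversed path, which exposes its last state. *)
Fixpoint cyl_prob_rev (r : seq S) : R :=
  if r is x :: r' then
    (if r' is [::] then (x == s0)%:R else cyl_prob_rev r' * trans_prob (rev r') x)
  else 1.

Fixpoint cyl_lo_rev (r : seq S) : R :=
  if r is x :: r' then
    (if r' is [::] then 0
     else cyl_lo_rev r' + cyl_prob_rev r' * cum_prob (rev r') (index x (enum S)))
  else 0.

Definition cyl_prob (w : seq S) := cyl_prob_rev (rev w).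
Definition cyl_lo (w : seq S) := cyl_lo_rev (rev w).
Definition cyl_itv (w : seq S) : interval R := `[cyl_lo w, cyl_lo w + cyl_prob w[.

Lemma cyl_prob1 x : cyl_prob [:: x] = (x == s0)%:R. Proof. by []. Qed.
Lemma cyl_lo1 x : cyl_lo [:: x] = 0. Proof. by []. Qed.

Lemma cyl_prob_rcons x w y :
  cyl_prob (rcons (x :: w) y) = cyl_prob (x :: w) * trans_prob (x :: w) y.
Proof.
rewrite /cyl_prob rev_rcons /=; case E: (rev (x :: w)) => [|z r].
  by move: (size_rev (x :: w)); rewrite E.
by rewrite -E revK.
Qed.

Lemma cyl_lo_rcons x w y : cyl_lo (rcons (x :: w) y) =
  cyl_lo (x :: w) + cyl_prob (x :: w) * cum_prob (x :: w) (index y (enum S)).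
Proof.
rewrite /cyl_prob /cyl_lo rev_rcons /=; case E: (rev (x :: w)) => [|z r].
  by move: (size_rev (x :: w)); rewrite E.
by rewrite -E revK.
Qed.

Lemma cyl_prob_ge0 w : 0 <= cyl_prob w.
Proof.
elim/last_ind: w => [|[|x w] y IH]; rewrite ?cyl_prob1 ?ler0n //.
by rewrite cyl_prob_rcons mulr_ge0 // trans_prob_ge0.
Qed.

Lemma in_cyl_itv w u : (u \in cyl_itv w) = (cyl_lo w <= u) && (u < cyl_lo w + cyl_prob w).
Proof. by rewrite in_itv. Qed.

Lemma index_enum_lt y : (index y (enum S) < #|S|)%N.
Proof. by rewrite cardE index_mem mem_enum. Qed.

Lemma cyl_hi_rcons x w y :
  cyl_lo (rcons (x :: w) y) + cyl_prob (rcons (x :: w) y) =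
  cyl_lo (x :: w) + cyl_prob (x :: w) * cum_prob (x :: w) (index y (enum S)).+1.
Proof.
rewrite cyl_lo_rcons cyl_prob_rcons cum_probS ?index_enum_lt //.
by rewrite nth_index ?mem_enum // mulrDr addrA.
Qed.

Lemma cyl_itv_rcons_sub x w y u :
  u \in cyl_itv (rcons (x :: w) y) -> u \in cyl_itv (x :: w).
Proof.
rewrite !in_cyl_itv cyl_hi_rcons cyl_lo_rcons => /andP [lo_u u_hi]; apply/andP; split.
  by apply: le_trans lo_u; rewrite lerDl mulr_ge0 ?cyl_prob_ge0 ?cum_prob_ge0.
apply: (lt_le_trans u_hi); rewrite lerD2l -{2}[cyl_prob (x :: w)]mulr1.
by rewrite ler_wpM2l ?cyl_prob_ge0 ?cum_prob_le1.
Qed.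

Lemma cyl_itv_rcons_disjoint x w y y' u :
  u \in cyl_itv (rcons (x :: w) y) -> u \in cyl_itv (rcons (x :: w) y') -> y = y'.
Proof.
have index_lt z z' : (index z (enum S) < index z' (enum S))%N ->
    u \in cyl_itv (rcons (x :: w) z) -> u \in cyl_itv (rcons (x :: w) z') -> False.
  rewrite !in_cyl_itv !cyl_hi_rcons !cyl_lo_rcons => zz' /andP [_ u_hi] /andP [lo_u _].
  have := le_lt_trans lo_u u_hi; rewrite ltrD2l ltNge ler_wpM2l ?cyl_prob_ge0 //.
  by rewrite le_cum_prob.
move=> uy uy'; case: (ltngtP (index y (enum S)) (index y' (enum S))) => [yy'|y'y|].
- by case: (index_lt _ _ yy' uy uy').
- by case: (index_lt _ _ y'y uy' uy).
- by move/(congr1 (nth s0 (enum S))); rewrite !nth_index ?mem_enum.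
Qed.

Lemma cyl_itv_rcons_cover x w u :
  u \in cyl_itv (x :: w) -> exists y, u \in cyl_itv (rcons (x :: w) y).
Proof.
rewrite in_cyl_itv => /andP [lo_u u_hi].
pose g k := cyl_lo (x :: w) + cyl_prob (x :: w) * cum_prob (x :: w) k.
have [k kS /andP [gk_u u_gk]] : exists2 k, (k < #|S|)%N & g k <= u < g k.+1.
  apply: nat_threshold_crossing; first by rewrite /g cum_prob0 mulr0 addr0.
  by rewrite /g cum_prob_full // trans_prob_sum1 mulr1.
exists (nth s0 (enum S) k).
have idx : index (nth s0 (enum S) k) (enum S) = k by rewrite index_uniq ?enum_uniq -?cardE.
by rewrite in_cyl_itv cyl_hi_rcons cyl_lo_rcons idx gk_u.
Qed.

Definition next_state (w : seq S) (u : R) : S :=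
  if [pick y | u \in cyl_itv (rcons w y)] is Some y then y else s0.

Lemma next_stateP x w u y : u \in cyl_itv (x :: w) ->
  (u \in cyl_itv (rcons (x :: w) y)) <-> next_state (x :: w) u = y.
Proof.
move=> uw; rewrite /next_state; case: pickP => [z uz|none].
  by split => [uy|<- //]; apply: cyl_itv_rcons_disjoint uz uy.
by have [z uz] := cyl_itv_rcons_cover uw; move: (none z); rewrite uz.
Qed.

Fixpoint sampled_prefix (u : R) (n : nat) : seq S :=
  if n is n'.+1 then rcons (sampled_prefix u n') (next_state (sampled_prefix u n') u)
  else [:: s0].

Definition sampled_path (u : R) : ipath S := fun n => last s0 (sampled_prefix u n).

Lemma size_sampled_prefix u n : size (sampled_prefix u n) = n.+1.
Proof. by elim: n => //= n IH; rewrite size_rcons IH. Qed.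

Lemma nth_sampled_prefix u n i : (i <= n)%N -> nth s0 (sampled_prefix u n) i = sampled_path u i.
Proof.
elim: n => [|n IH]; first by rewrite leqn0 => /eqP ->.
rewrite leq_eqVlt => /orP [/eqP ->|ilt]; first by rewrite /sampled_path (last_nth s0) size_sampled_prefix.
by rewrite /= nth_rcons size_sampled_prefix ilt IH.
Qed.

Lemma cyl_itv_sub01 w u : w != [::] -> u \in cyl_itv w -> 0 <= u < 1.
Proof.
elim/last_ind: w => [//|[|x w] y IH] _.
  rewrite in_cyl_itv cyl_prob1 cyl_lo1 add0r => /andP [-> u_lt] /=.
  by apply: (lt_le_trans u_lt); case: (y == s0).
by move=> /cyl_itv_rcons_sub; apply: IH.
Qed.

Lemma sampled_prefixP u n w : size w = n.+1 -> 0 <= u < 1 ->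
  sampled_prefix u n = w <-> u \in cyl_itv w.
Proof.
move=> sw u01; elim: n w sw => [|n IH] w sw.
  case: w sw => [|x [|//]] // _; rewrite in_cyl_itv cyl_prob1 cyl_lo1 add0r /=.
  case: (eqVneq x s0) => [->|xs0] /=; first by rewrite u01.
  split; first by case=> /esym/eqP; rewrite (negbTE xs0).
  by move=> /andP [u_ge0 u_lt0]; move: (le_lt_trans u_ge0 u_lt0); rewrite ltxx.
case/lastP: w sw => [//|[//|x w] y]; rewrite size_rcons => /succn_inj sw.
split.
  move=> /eqP; rewrite eqseq_rcons => /andP [/eqP pre_w /eqP next_y].
  have uw : u \in cyl_itv (x :: w) by apply/(IH _ sw).
  by apply/(next_stateP _ uw); rewrite -pre_w.
move=> uwy; have uw := cyl_itv_rcons_sub uwy.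
have pre_w : sampled_prefix u n = x :: w by apply/(IH _ sw).
by rewrite /= pre_w; congr rcons; apply/(next_stateP _ uw).
Qed.

Lemma sampled_prefixE u n : sampled_prefix u n = prefix (sampled_path u) n.
Proof.
apply: (@eq_from_nth _ s0) => [|i]; first by rewrite size_sampled_prefix size_mkseq.
by rewrite size_sampled_prefix ltnS => i_le; rewrite nth_mkseq // nth_sampled_prefix.
Qed.

Definition unit_itv : set R := [set` `[0%R, 1%R[].

Lemma sampled_path_Cyl x w :
  sampled_path @^-1` (Cyl (x :: w)) `&` unit_itv = [set` cyl_itv (x :: w)].
Proof.
have sw : size (x :: w) = (size w).+1 by [].
apply/seteqP; split => u /=.
  move=> [cw u01]; rewrite /unit_itv /= in_itv /= in u01.
  by apply/(sampled_prefixP sw u01); rewrite sampled_prefixE; apply/(Cyl_prefix _ sw).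
move=> uw; have u01 := @cyl_itv_sub01 (x :: w) u isT uw.
split; last by rewrite /unit_itv /= in_itv.
by apply/(Cyl_prefix _ sw); rewrite -sampled_prefixE; apply/(sampled_prefixP sw u01).
Qed.

Definition path_measure (B : set (ipath S)) : R :=
  fine (lebesgue_measure (sampled_path @^-1` B `&` unit_itv)).

Lemma path_measure_Cyl x w : path_measure (Cyl (x :: w)) = cyl_prob (x :: w).
Proof.
rewrite /path_measure sampled_path_Cyl /cyl_itv lebesgue_measure_itv_co.
  by rewrite addrC addKr.
by rewrite lerDl cyl_prob_ge0.
Qed.

Lemma measurable_sampled_path_preimage B :
  cyl_measurable B -> measurable (sampled_path @^-1` B `&` unit_itv).
Proof.
move=> mB.
pose G := [set B | measurable (sampled_path @^-1` B `&` unit_itv)].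
have unit_itv_meas : measurable unit_itv by apply: measurable_itv.
have G_sigma : sigma_algebra setT G.
  split.
  - by rewrite /G /= preimage_set0 set0I.
  - move=> B' GB'; rewrite /G /=.
    have -> : sampled_path @^-1` (setT `\` B') `&` unit_itv =
              unit_itv `\` (sampled_path @^-1` B' `&` unit_itv).
      apply/seteqP; split => u /=; first by move=> [[_ nB'] u01]; split => // -[].
      by move=> [u01 nB']; split => //; split => // B'u; apply: nB'.
    exact: measurableD.
  - move=> F GF; rewrite /G /= preimage_bigcup setI_bigcupl.
    by apply: bigcup_measurable => k _; apply: GF.
have cyl_G : @cylinders S `<=` G.
  by move=> C [x [w ->]]; rewrite /G /= sampled_path_Cyl; apply: measurable_itv.
exact: (smallest_sub G_sigma cyl_G mB).
Qed.

Lemma path_measure_fin_num B : cyl_measurable B ->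
  lebesgue_measure (sampled_path @^-1` B `&` unit_itv) \is a fin_num.
Proof.
move=> mB; rewrite ge0_fin_numE ?measure_ge0 //.
apply: (le_lt_trans (y := lebesgue_measure unit_itv)).
  apply: le_measure; rewrite ?inE //; [exact: measurable_sampled_path_preimage | exact: measurable_itv].
by rewrite /unit_itv lebesgue_measure_itv_co // subr0 ltry.
Qed.

Lemma path_measure_prob : prob_measure path_measure.
Proof.
split.
- by move=> B _; rewrite /path_measure fine_ge0 // measure_ge0.
- by rewrite /path_measure preimage_set0 set0I measure0.
- by rewrite /path_measure preimage_setT setTI /unit_itv lebesgue_measure_itv_co // subr0.
move=> F mF tF.
have mE n := measurable_sampled_path_preimage (mF n).
have tE : trivIset setT (fun n => sampled_path @^-1` F n `&` unit_itv).
  by move=> i j _ _ [u [[Fi _] [Fj _]]]; apply: tF => //; exists (sampled_path u).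
have mU := cyl_measurable_bigcup mF.
have lim_leb : (fun n => \sum_(0 <= i < n) lebesgue_measure (sampled_path @^-1` F i `&` unit_itv))
    @ \oo --> ((path_measure (\bigcup_n F n))%:E : \bar R).
  rewrite /path_measure fineK ?(path_measure_fin_num mU) // preimage_bigcup setI_bigcupl.
  exact: (@measure_sigma_additive _ _ _ (@lebesgue_measure R) _ mE tE).
have -> : (fun n => \sum_(0 <= i < n) path_measure (F i)) =
    fine \o (fun n => \sum_(0 <= i < n) lebesgue_measure (sampled_path @^-1` F i `&` unit_itv)).
  by apply: funext => n /=; rewrite /path_measure sum_fine // => i _; apply: path_measure_fin_num.
exact: fine_cvg lim_leb.
Qed.

Lemma path_measure_is_Pr : is_Pr s0 sigma pi path_measure.
Proof.
split; first exact: path_measure_prob.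
  by move=> s'; rewrite path_measure_Cyl cyl_prob1; case: (s' == s0).
by move=> x w s'; rewrite !path_measure_Cyl cyl_prob_rcons.
Qed.

End PathMeasure.

Section Transitions.
Variables (R : realType) (S A : finType) (I : S -> A -> S -> interval R).

Lemma Gamma_convex (T : eqType) (r : seq T) (P : pred T) (w : T -> R) (mu : T -> S -> R) s a :
  (forall j, P j -> 0 <= w j) -> \sum_(j <- r | P j) w j = 1 ->
  (forall j, P j -> Gamma I s a (mu j)) ->
  Gamma I s a (fun y => \sum_(j <- r | P j) w j * mu j y).
Proof.
move=> w_ge0 w_sum1 Gmu; split; first split.
- move=> y; apply: sumr_ge0 => j Pj; apply: mulr_ge0 (w_ge0 j Pj) _.
  by case: (Gmu j Pj) => [[mu_ge0 _] _].
- rewrite exchange_big /= -w_sum1; apply: eq_bigr => j Pj; rewrite -mulr_sumr.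
  by case: (Gmu j Pj) => [[_ ->] _]; rewrite mulr1.
- by move=> y; apply: convex_comb_itv => // j Pj; case: (Gmu j Pj) => _; apply.
Qed.

Lemma ctrans_mix s (p : A -> R) (mu : A -> S -> R) : is_dist p ->
  (forall a, Gamma I s a (mu a)) -> ctrans I s (fun y => \sum_a p a * mu a y).
Proof.
move=> [p_ge0 p_sum1] Gmu; have sum_enum_val (F : A -> R) : \sum_(i < #|A|) F (enum_val i) = \sum_a F a.
  by rewrite -big_enum_val; apply: eq_bigl => a; rewrite inE.
exists #|A|, (fun i => p (enum_val i)), enum_val, (fun i => mu (enum_val i)).
split => // [|y]; first by rewrite sum_enum_val.
by rewrite (sum_enum_val (fun a => p a * mu a y)).
Qed.

(* [default] supplies the transitions of the actions of weight zero. *)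
Lemma ctrans_as_mix (default : S -> A -> S -> R) s mu :
  (forall s a, Gamma I s a (default s a)) -> ctrans I s mu ->
  exists p mu_a, [/\ is_dist p, forall a, Gamma I s a (mu_a a) &
     forall y, mu y = \sum_a p a * mu_a a y].
Proof.
move=> Gdefault [n [lam [act [nu [lam_ge0 lam_sum1 Gnu muE]]]]].
pose p a := \sum_(i | act i == a) lam i.
have p_ge0 a : 0 <= p a by apply: sumr_ge0.
have sum_by_act (F : 'I_n -> R) : \sum_i F i = \sum_a \sum_(i | act i == a) F i.
  exact: partition_big.
pose mu_a a := if p a == 0 then default s a
               else (fun y => \sum_(i | act i == a) (lam i / p a) * nu i y).
exists p, mu_a; split.
- by split => //; rewrite /p -sum_by_act.
- move=> a; rewrite /mu_a; case: eqP => [_|/eqP pa0]; first exact: Gdefault.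
  apply: Gamma_convex => [i _| |i /eqP <- //]; first exact: divr_ge0.
  by rewrite -mulr_suml divff.
- move=> y; rewrite muE sum_by_act; apply: eq_bigr => a _; rewrite /mu_a.
  case: eqP => [pa0|/eqP pa0].
    rewrite pa0 mul0r; apply: big1 => i ai.
    by rewrite (psumr_eq0P (fun i _ => lam_ge0 i) pa0 ai) mul0r.
  by rewrite mulr_sumr; apply: eq_bigr => i _; rewrite mulrA mulrCA mulfV ?mulr1.
Qed.

End Transitions.

Section Classes.
Variables (R : realType) (S A : finType) (E : rel S).
Hypothesis E_equiv : Defs.equivalence_rel E.

Lemma equivxx x : E x x. Proof. by case: E_equiv. Qed.
Lemma equiv_sym x y : E x y -> E y x. Proof. by case: E_equiv => _ Esym _; rewrite Esym. Qed.
Lemma equiv_trans x y z : E x y -> E y z -> E x z.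
Proof. by case: E_equiv => _ _ Etrans; apply: Etrans. Qed.

Definition class_rep (x : S) : S := if [pick y | E x y] is Some y then y else x.

Lemma class_repP x : E x (class_rep x).
Proof. by rewrite /class_rep; case: pickP => // _; apply: equivxx. Qed.

Lemma eq_class_rep x y : class_rep x = class_rep y <-> E x y.
Proof.
split=> [xy|Exy]; first by apply: equiv_trans (class_repP x) _; rewrite xy equiv_sym ?class_repP.
rewrite /class_rep (@eq_pick _ _ (E y)); first by case: pickP => // none; move: (none y); rewrite equivxx.
move=> z /=; apply/idP/idP => [Exz|Eyz]; first exact: equiv_trans (equiv_sym Exy) Exz.
exact: equiv_trans Exy Eyz.
Qed.

(* The mass of a class is indexed by its representative, so that it is defined on
   all of [S] (and vanishes off representatives). *)
Definition class_mass (mu : S -> R) (c : S) : R := \sum_(y | class_rep y == c) mu y.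

Lemma class_mass_eq mu nu : (forall c, mass_class E mu c = mass_class E nu c) ->
  forall c, class_mass mu c = class_mass nu c.
Proof.
move=> munu c; case: (pickP (fun z => class_rep z == c)) => [z /eqP zc|none].
  have massE f : class_mass f c = mass_class E f z.
    rewrite /class_mass /mass_class; apply: eq_bigl => y; rewrite -zc.
    by apply/eqP/idP => [/eq_class_rep/equiv_sym | /equiv_sym/eq_class_rep].
  by rewrite !massE.
by rewrite /class_mass !big_pred0.
Qed.

Definition class_prob (P : set (ipath S) -> R) (H : seq S) : R :=
  \sum_(t <- paths S (size H) | map class_rep t == H) P (Cyl t).

Lemma class_prob_ge0 P H : prob_measure P -> 0 <= class_prob P H.
Proof. by move=> P_prob; apply: sumr_ge0 => t _; apply: prob_Cyl_ge0. Qed.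

Lemma class_prob1 s (sigma : seq S -> A -> R) pi P c : is_Pr s sigma pi P ->
  class_prob P [:: c] = (class_rep s == c)%:R.
Proof.
move=> [_ P_init _].
rewrite /class_prob big_mkcond big_allpairs_dep big_seq1 /= big_enum /=.
rewrite (bigD1 s) //= big1 ?addr0 => [|y ys]; first by rewrite P_init eqxx eqseq_cons andbT; case: eqP.
by rewrite P_init (negbTE ys); case: ifP.
Qed.

Lemma class_prob_rcons s (sigma : seq S -> A -> R) pi P H c : is_Pr s sigma pi P -> H != [::] ->
  class_prob P (rcons H c) =
  \sum_(t <- paths S (size H) | map class_rep t == H)
    P (Cyl t) * class_mass (trans_prob sigma pi t) c.
Proof.
move=> [_ _ P_step] H_ne0.
rewrite /class_prob size_rcons big_mkcond big_allpairs_dep /= [RHS]big_mkcond.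
rewrite big_seq [RHS]big_seq; apply: eq_bigr => t; rewrite mem_paths => /eqP st.
under eq_bigr => y _ do rewrite map_rcons eqseq_rcons.
case: (map class_rep t =P H) => tH; last by rewrite big1.
case: t st tH => [st|x w _ _]; first by move: H_ne0; rewrite -size_eq0 -st.
rewrite /class_mass mulr_sumr big_enum /= big_mkcond [RHS]big_mkcond.
by apply: eq_bigr => y _ /=; case: (class_rep y == c) => //; exact: P_step.
Qed.

Lemma class_prob_rcons_eq0 s (sigma : seq S -> A -> R) pi P H c :
  is_Pr s sigma pi P -> H != [::] -> class_prob P H = 0 -> class_prob P (rcons H c) = 0.
Proof.
move=> P_Pr H_ne0 /eqP; have P_prob : prob_measure P by case: P_Pr.
rewrite psumr_eq0 => [/allP P0|t _]; last exact: prob_Cyl_ge0.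
rewrite (class_prob_rcons c P_Pr H_ne0) big_seq_cond big1 // => t /andP [tp tH].
by move: (P0 t tp); rewrite tH => /eqP ->; rewrite mul0r.
Qed.

End Classes.

(* After a history [h] from [u], the simulating scheduler mixes the answers of the
   bisimulation to the transitions taken after the histories [t] from [v] with the
   same class trace as [h], weighted by the conditional probabilities of these [t]. *)
Section Simulation.
Variables (R : realType) (S A AP : finType) (L : S -> {set AP}) (I : S -> A -> S -> interval R).
Variable E : rel S.
Hypothesis E_bisim : forall_bisimulation L I E.
Variable default : S -> A -> S -> R.
Hypothesis Gdefault : forall s a, Gamma I s a (default s a).
Variable a0 : A.
Variables (v u : S).
Hypothesis Evu : E v u.
Variables (sigma' : seq S -> A -> R) (pi' : seq S -> A -> S -> R) (P' : set (ipath S) -> R).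
Hypotheses (sigma'P : scheduler sigma') (pi'P : nature I pi') (P'_Pr : is_Pr v sigma' pi' P').

Let E_equiv : Defs.equivalence_rel E := E_bisim.1.
Local Notation rep := (class_rep E).
Local Notation cmass := (class_mass E).
Local Notation cprob := (class_prob E).

Definition mix (p : (A -> R) * (A -> S -> R)) (y : S) : R := \sum_a p.1 a * p.2 a y.

Definition simulates x y (nu : S -> R) (p : (A -> R) * (A -> S -> R)) : Prop :=
  [/\ is_dist p.1, (forall a, Gamma I y a (p.2 a)) &
      (E x y -> ctrans I x nu -> forall c, cmass (mix p) c = cmass nu c)].

Lemma dirac_dist : is_dist (fun a : A => (a == a0)%:R : R).
Proof.
split=> [a|]; first by rewrite ler0n.
by rewrite (bigD1 a0) //= eqxx big1 ?addr0 // => a /negbTE ->.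
Qed.

Lemma simulates_exists x y nu : exists p, simulates x y nu p.
Proof.
case: (pselect (E x y /\ ctrans I x nu)) => [[Exy xnu]|not_related].
  have [nu' [ynu' massE]] := (E_bisim.2 x y Exy).2 nu xnu.
  have [p [mu_a [p_dist Gmu_a nu'E]]] := ctrans_as_mix Gdefault ynu'.
  exists (p, mu_a); split => // _ _ c.
  by rewrite (class_mass_eq E_equiv massE c); apply: eq_bigr => z _; rewrite nu'E.
exists ((fun a => (a == a0)%:R), default y); split => //; first exact: dirac_dist.
by move=> Exy xnu; case: not_related.
Qed.

Definition simulation x y nu := proj1_sig (cid (simulates_exists x y nu)).

Lemma simulationP x y nu : simulates x y nu (simulation x y nu).
Proof. exact: proj2_sig (cid _). Qed.

Definition trace_prob (h : seq S) : R := cprob P' (map rep h).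
Definition same_trace (h t : seq S) : bool := map rep t == map rep h.
Definition answer (t h : seq S) := simulation (last v t) (last u h) (trans_prob sigma' pi' t).
Definition weight (t h : seq S) (a : A) : R := P' (Cyl t) / trace_prob h * (answer t h).1 a.

(* When the class trace of [h] has probability zero the choices are irrelevant. *)
Definition sim_sched (h : seq S) (a : A) : R :=
  if trace_prob h == 0 then (a == a0)%:R
  else \sum_(t <- paths S (size h) | same_trace h t) weight t h a.

Definition sim_nature (h : seq S) (a : A) : S -> R :=
  if (trace_prob h == 0) || (sim_sched h a == 0) then default (last u h) a
  else (fun y => \sum_(t <- paths S (size h) | same_trace h t)
                   weight t h a / sim_sched h a * (answer t h).2 a y).

Lemma P'_prob : prob_measure P'. Proof. by case: P'_Pr. Qed.

Lemma trace_probE h : \sum_(t <- paths S (size h) | same_trace h t) P' (Cyl t) = trace_prob h.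
Proof. by rewrite /trace_prob /class_prob size_map. Qed.

Lemma answer_dist t h : is_dist (answer t h).1.
Proof. by case: (simulationP (last v t) (last u h) (trans_prob sigma' pi' t)). Qed.

Lemma answer_Gamma t h a : Gamma I (last u h) a ((answer t h).2 a).
Proof. by case: (simulationP (last v t) (last u h) (trans_prob sigma' pi' t)) => _ + _; apply. Qed.

Lemma weight_ge0 t h a : 0 <= weight t h a.
Proof.
have [answer_ge0 _] := answer_dist t h.
rewrite /weight mulr_ge0 ?divr_ge0 ?(prob_Cyl_ge0 P'_prob) //.
exact: class_prob_ge0 P'_prob.
Qed.

Lemma sim_schedE h a : trace_prob h != 0 ->
  sim_sched h a = \sum_(t <- paths S (size h) | same_trace h t) weight t h a.
Proof. by move=> tp_ne0; rewrite /sim_sched (negbTE tp_ne0). Qed.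

Lemma sim_sched_ge0 h a : 0 <= sim_sched h a.
Proof.
by rewrite /sim_sched; case: ifP => _; [rewrite ler0n | apply: sumr_ge0 => t _; apply: weight_ge0].
Qed.

Lemma sim_sched_scheduler : scheduler sim_sched.
Proof.
move=> x w; split=> [a|]; first exact: sim_sched_ge0.
rewrite /sim_sched; case: eqP => [_|/eqP tp_ne0]; first by case: dirac_dist.
rewrite exchange_big (eq_bigr (fun t => P' (Cyl t) / trace_prob (x :: w))) => [|t _].
  by rewrite -mulr_suml trace_probE divff.
by rewrite /weight -mulr_sumr; case: (answer_dist t (x :: w)) => _ ->; rewrite mulr1.
Qed.

Lemma sim_nature_nature : nature I sim_nature.
Proof.
move=> x w a; rewrite /sim_nature; case: ifP => [_|/norP [tp_ne0 ss_ne0]]; first exact: Gdefault.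
apply: Gamma_convex => [t _||t _].
- by rewrite divr_ge0 ?weight_ge0 ?sim_sched_ge0.
- by rewrite -mulr_suml -sim_schedE // divff.
- exact: answer_Gamma.
Qed.

Lemma sim_sched_nature h a y : trace_prob h != 0 ->
  sim_sched h a * sim_nature h a y =
  \sum_(t <- paths S (size h) | same_trace h t) weight t h a * (answer t h).2 a y.
Proof.
move=> tp_ne0; rewrite /sim_nature (negbTE tp_ne0) /=; case: eqP => [ss0|/eqP ss_ne0].
  rewrite ss0 mul0r big_seq_cond big1 // => t /andP [tp st].
  have := ss0; rewrite sim_schedE // => /eqP.
  rewrite psumr_eq0 => [/allP/(_ t tp)|]; last by move=> ? _; apply: weight_ge0.
  by rewrite st => /eqP ->; rewrite mul0r.
rewrite mulr_sumr; apply: eq_bigr => t _.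
by rewrite mulrA mulrCA mulfV // mulr1.
Qed.

Lemma sim_trans_prob h y : trace_prob h != 0 ->
  trans_prob sim_sched sim_nature h y =
  \sum_(t <- paths S (size h) | same_trace h t) P' (Cyl t) / trace_prob h * mix (answer t h) y.
Proof.
move=> tp_ne0; rewrite /trans_prob (eq_bigr _ (fun a _ => sim_sched_nature a y tp_ne0)).
rewrite exchange_big; apply: eq_bigr => t _; rewrite /mix mulr_sumr.
by apply: eq_bigr => a _; rewrite /weight mulrA.
Qed.

Lemma answer_class_mass t h c : h != [::] -> t \in paths S (size h) -> same_trace h t ->
  cmass (mix (answer t h)) c = cmass (trans_prob sigma' pi' t) c.
Proof.
move=> h_ne0; rewrite mem_paths => /eqP st /eqP trace_th.
case: (simulationP (last v t) (last u h) (trans_prob sigma' pi' t)) => _ _; apply.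
  apply/(eq_class_rep E_equiv).
  by rewrite -(last_map rep t v) -(last_map rep h u) trace_th (eq_class_rep E_equiv v u).2.
case: t st {trace_th} => [st|x w _]; first by move: h_ne0; rewrite -size_eq0 -st.
exact: ctrans_mix (sigma'P x w) (pi'P x w).
Qed.

Lemma class_mass_sim_trans_prob h c : h != [::] -> trace_prob h != 0 ->
  cmass (trans_prob sim_sched sim_nature h) c = cprob P' (rcons (map rep h) c) / trace_prob h.
Proof.
move=> h_ne0 tp_ne0; have trace_ne0 : map rep h != [::] by rewrite -size_eq0 size_map size_eq0.
rewrite /class_mass; under eq_bigr => y _ do rewrite sim_trans_prob //.
rewrite exchange_big /= (class_prob_rcons _ _ P'_Pr trace_ne0) size_map.
rewrite mulr_suml big_seq_cond [RHS]big_seq_cond; apply: eq_bigr => t /andP [tp th].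
by rewrite -mulr_sumr -/(cmass (mix (answer t h)) c) answer_class_mass // mulrAC.
Qed.

Lemma class_prob_sim P : is_Pr u sim_sched sim_nature P ->
  forall H, H != [::] -> cprob P H = cprob P' H.
Proof.
move=> P_Pr; have P_prob : prob_measure P by case: P_Pr.
elim/last_ind => [//|H c IH] _; case: (eqVneq H [::]) => [->|H_ne0].
  by rewrite /= (class_prob1 _ _ P_Pr) (class_prob1 _ _ P'_Pr) (eq_class_rep E_equiv v u).2.
case: (eqVneq (cprob P' H) 0) => [cp0|cp_ne0].
  have cpP0 : cprob P H = 0 by rewrite IH.
  by rewrite (class_prob_rcons_eq0 c P_Pr H_ne0 cpP0) (class_prob_rcons_eq0 c P'_Pr H_ne0 cp0).
have stepE t : t \in paths S (size H) -> map rep t == H ->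
    cmass (trans_prob sim_sched sim_nature t) c = cprob P' (rcons H c) / cprob P' H.
  move=> tp /eqP tH; have tp_ne0 : trace_prob t != 0 by rewrite /trace_prob tH.
  have t_ne0 : t != [::] by move: tp H_ne0; rewrite mem_paths -!size_eq0 => /eqP ->.
  by rewrite class_mass_sim_trans_prob // /trace_prob tH.
rewrite (class_prob_rcons _ _ P_Pr H_ne0) big_seq_cond.
under eq_bigr => t /andP [tp tH] do rewrite stepE //.
by rewrite -big_seq_cond -mulr_suml -/(cprob P H) IH // mulrC divfK.
Qed.

End Simulation.

Scheme sform_pform_ind := Induction for sform Sort Prop
  with pform_sform_ind := Induction for pform Sort Prop.

Section Invariance.
Variables (R : realType) (S A AP : finType) (L : S -> {set AP}) (I : S -> A -> S -> interval R).
Hypothesis I_wf : imdp_wf I.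
Variable E : rel S.
Hypothesis E_bisim : forall_bisimulation L I E.
Variable x0 : S.

Let E_equiv : Defs.equivalence_rel E := E_bisim.1.
Local Notation rep := (class_rep E).
Local Notation cprob := (class_prob E).

Definition class_invariant (Phi : ipath S -> Prop) : Prop :=
  forall f g, (forall i, E (f i) (g i)) -> Phi f -> Phi g.

Definition prefix_determined (n : nat) (Phi : ipath S -> Prop) : Prop :=
  forall f g, (forall i, (i <= n)%N -> f i = g i) -> Phi f -> Phi g.

Lemma equiv_nth_class_rep (w : seq S) i : E (nth x0 w i) (nth x0 (map rep w) i).
Proof.
case: (ltnP i (size w)) => iw; first by rewrite (nth_map x0) //; apply: class_repP.
by rewrite !nth_default ?size_map //; apply: equivxx.
Qed.

Lemma prefix_determined_event n Phi : prefix_determined n Phi ->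
  [set om | Phi om] = prefix_event n (fun w => `[< Phi (nth x0 w) >]).
Proof.
move=> PhiD; apply/seteqP; split => om Phi_om; rewrite /prefix_event /=.
  by apply/asboolP; apply: PhiD Phi_om => i i_le; rewrite nth_mkseq.
by move/asboolP: Phi_om; apply: PhiD => i i_le; rewrite nth_mkseq.
Qed.

Lemma prob_prefix_event_class (P : set (ipath S) -> R) n (D : pred (seq S)) :
  prob_measure P ->
  (forall w, D (map rep w) = D w) ->
  P (prefix_event n D) = \sum_(H <- paths S n.+1 | D H) cprob P H.
Proof.
move=> P_prob D_rep; rewrite (prob_prefix_event P_prob) [RHS]big_seq_cond.
under [RHS]eq_bigr => H /andP [HP _].
  rewrite /class_prob big_mkcond; move: HP; rewrite mem_paths => /eqP ->.
  over.
rewrite exchange_big big_mkcond big_seq [RHS]big_seq; apply: eq_bigr => t tP.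
have tHP : map rep t \in paths S n.+1 by move: tP; rewrite !mem_paths size_map.
rewrite big_mkcond (bigD1_seq (map rep t)) ?uniq_paths //= eqxx tHP D_rep big1 ?addr0 //.
by move=> H tH; rewrite eq_sym (negbTE tH); case: ifP.
Qed.

Lemma prob_eq_class_prob (Phi : ipath S -> Prop) n (P P' : set (ipath S) -> R) :
  prob_measure P -> prob_measure P' ->
  (forall H, H != [::] -> cprob P H = cprob P' H) ->
  class_invariant Phi -> prefix_determined n Phi ->
  P [set om | Phi om] = P' [set om | Phi om].
Proof.
move=> P_prob P'_prob PP' PhiE PhiD.
have D_rep w : `[< Phi (nth x0 (map rep w)) >] = `[< Phi (nth x0 w) >].
  apply: asbool_equiv_eq; split; apply: PhiE => i; last exact: equiv_nth_class_rep.
  exact/(equiv_sym E_equiv)/equiv_nth_class_rep.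
rewrite (prefix_determined_event PhiD) !prob_prefix_event_class //.
rewrite big_seq_cond [RHS]big_seq_cond; apply: eq_bigr => H /andP [HP _]; apply: PP'.
by move: HP; rewrite mem_paths -size_eq0 => /eqP ->.
Qed.

Definition sat_invariant (phi : sform AP) : Prop :=
  forall x y, E x y -> sat L I x phi -> sat L I y phi.

Definition psat_invariant (psi : pform AP) : Prop :=
  class_invariant (psat L I ^~ psi) /\
  forall P P' : set (ipath S) -> R, prob_measure P -> prob_measure P' ->
    (forall H, H != [::] -> cprob P H = cprob P' H) ->
    P [set om | psat L I om psi] = P' [set om | psat L I om psi].

Lemma simulating_measure_exists v u sigma' pi' (P' : set (ipath S) -> R) :
  E v u -> scheduler sigma' -> nature I pi' -> is_Pr v sigma' pi' P' ->
  exists sigma pi P, [/\ scheduler sigma, nature I pi, is_Pr u sigma pi P &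
    forall H, H != [::] -> cprob P H = cprob P' H].
Proof.
move=> Evu sigma'P pi'P P'_Pr.
pose default s a := proj1_sig (cid (I_wf.2 s a)).
have Gdefault s a : Gamma I s a (default s a) := proj2_sig (cid _).
have [a0 _] : exists a0 : A, true.
  case: (pickP (fun _ : A => true)) => [a0 _|noA]; first by exists a0.
  by case: (sigma'P v [::]) => _; rewrite big_pred0 // => /esym/eqP; rewrite oner_eq0.
pose sigma := sim_sched E_bisim Gdefault a0 v u sigma' pi' P'.
pose pi := sim_nature E_bisim Gdefault a0 v u sigma' pi' P'.
have sigmaP : scheduler sigma by apply: sim_sched_scheduler P'_Pr.
have piP : nature I pi by apply: sim_nature_nature P'_Pr.
have P_Pr := path_measure_is_Pr u sigmaP piP.
exists sigma, pi, (path_measure u sigma pi); split => // H.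
exact: (class_prob_sim Evu sigma'P pi'P P'_Pr P_Pr).
Qed.

Lemma sat_prob_invariant c p psi : psat_invariant psi -> sat_invariant (FProb c p psi).
Proof.
move=> [_ psiP] x y Exy x_sat sigma' pi' sigma'P pi'P P' P'_Pr /=.
have [sigma [pi [P [sigmaP piP P_Pr PP']]]] :=
  simulating_measure_exists (equiv_sym E_equiv Exy) sigma'P pi'P P'_Pr.
have [P_prob _ _] := P_Pr; have [P'_prob _ _] := P'_Pr.
by rewrite -(psiP P) //; apply: x_sat P_Pr.
Qed.

Lemma next_invariant phi : sat_invariant phi -> psat_invariant (FNext phi).
Proof.
move=> phiE; have nextE : class_invariant (psat L I ^~ (FNext phi)).
  by move=> f g fg /=; apply: phiE (fg 1%N).
split=> // P P' P_prob P'_prob PP'; apply: (@prob_eq_class_prob _ 1) => // f g fg /=.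
by rewrite fg.
Qed.

Lemma bounded_until_invariant phi1 phi2 k : sat_invariant phi1 -> sat_invariant phi2 ->
  psat_invariant (FBUntil phi1 phi2 k).
Proof.
move=> phi1E phi2E; have buntilE : class_invariant (psat L I ^~ (FBUntil phi1 phi2 k)).
  move=> f g fg /= [i [ik phi2_i phi1_lt]]; exists i; split => //; first exact: phi2E phi2_i.
  by move=> j ji; apply: phi1E (phi1_lt j ji).
split=> // P P' P_prob P'_prob PP'; apply: (@prob_eq_class_prob _ k) => //.
move=> f g fg /= [i [/andP [i_gt0 ik] phi2_i phi1_lt]]; exists i; split; first by rewrite i_gt0.
  by rewrite -fg // (leq_trans (leq_pred _) ik).
move=> j /andP [j_gt0 ji]; rewrite -fg; first by apply: phi1_lt; rewrite j_gt0.
by rewrite (leq_trans (leq_pred _)) // (leq_trans (ltnW ji)).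
Qed.

Definition first_hit (phi1 phi2 : sform AP) (k : nat) (om : ipath S) : Prop :=
  sat L I (om k) phi2 /\ forall j, (j < k)%N -> sat L I (om j) phi1 /\ ~ sat L I (om j) phi2.

Lemma until_first_hit phi1 phi2 :
  [set om | psat L I om (FUntil phi1 phi2)] = \bigcup_k [set om | first_hit phi1 phi2 k om].
Proof.
apply/seteqP; split => om /=.
  move=> [k [i [/andP [i_gt0 ik] phi2_i phi1_lt]]].
  have hit : exists m, `[< sat L I (om m) phi2 >] by exists i.-1; apply/asboolP.
  case: (ex_minnP hit) => m /asboolP phi2_m m_min; exists m => //; split => // j jm; split.
    have mi : (m <= i.-1)%N by apply: m_min; apply/asboolP.
    by apply: (phi1_lt j.+1); apply/andP; split => //; lia.
  by move=> phi2_j; move: (m_min j (asboolT phi2_j)); rewrite leqNgt jm.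
move=> [k _ [phi2_k phi1_lt]]; exists k.+1, k.+1; split; rewrite ?ltnS ?leqnn //.
by move=> j /andP [j_gt0 jk]; case: (phi1_lt j.-1) => //; rewrite -ltnS prednK.
Qed.

Lemma until_invariant phi1 phi2 : sat_invariant phi1 -> sat_invariant phi2 ->
  psat_invariant (FUntil phi1 phi2).
Proof.
move=> phi1E phi2E; split.
  move=> f g fg /= [k [i [ik phi2_i phi1_lt]]]; exists k, i; split => //; first exact: phi2E phi2_i.
  by move=> j ji; apply: phi1E (phi1_lt j ji).
move=> P P' P_prob P'_prob PP'.
have hitD k : prefix_determined k (first_hit phi1 phi2 k).
  move=> f g fg [phi2_k phi1_lt]; split; first by rewrite -fg.
  by move=> j jk; rewrite -fg ?(ltnW jk) //; apply: phi1_lt.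
have hitE k : class_invariant (first_hit phi1 phi2 k).
  move=> f g fg [phi2_k phi1_lt]; split; first exact: phi2E phi2_k.
  move=> j jk; case: (phi1_lt j jk) => phi1_j not_phi2_j; split; first exact: phi1E phi1_j.
  by move=> phi2_j; apply: not_phi2_j; apply: phi2E phi2_j; apply: (equiv_sym E_equiv).
have hit_meas k : cyl_measurable [set om | first_hit phi1 phi2 k om].
  by rewrite (prefix_determined_event (hitD k)); apply: cyl_measurable_prefix_event.
have hit_disj : trivIset setT (fun k => [set om | first_hit phi1 phi2 k om]).
  move=> k l _ _ [om [[phi2_k phi1_lt_k] [phi2_l phi1_lt_l]]].
  case: (ltngtP k l) => // kl; [by case: (phi1_lt_l k kl) | by case: (phi1_lt_k l kl)].
rewrite until_first_hit; apply: prob_bigcup_eq => // k.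
exact: (@prob_eq_class_prob _ k).
Qed.

Lemma sat_invariant_all phi : sat_invariant phi.
Proof.
apply: (@sform_pform_ind AP sat_invariant psat_invariant).
- by [].
- by move=> a x y Exy /=; have [-> _] := E_bisim.2 x y Exy.
- by move=> phi' phi'E x y Exy /= not_x y_sat; apply/not_x/(phi'E y x _ y_sat)/(equiv_sym E_equiv).
- by move=> phi1 phi1E phi2 phi2E x y Exy /= [x1 x2]; split; [apply: phi1E x1 | apply: phi2E x2].
- by move=> c p psi psiE; apply: sat_prob_invariant.
- by move=> phi' phi'E; apply: next_invariant.
- by move=> phi1 phi1E phi2 phi2E; apply: until_invariant.
- by move=> phi1 phi1E phi2 phi2E k; apply: bounded_until_invariant.
Qed.

End Invariance.

Theorem theorem1 (R : realType) (S A AP : finType)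
    (L : S -> {set AP}) (I : S -> A -> S -> interval R) :
  imdp_wf I ->
  forall s t : S, forall_bisimilar L I s t ->
  forall phi : sform AP, wf_sform phi -> sat L I s phi <-> sat L I t phi.
Proof.
move=> I_wf s t [E [E_bisim Est]] phi _.
by split; apply: (sat_invariant_all I_wf E_bisim s) => //; apply: (equiv_sym E_bisim.1 Est).
Qed.
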